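(* Let $p$ be a positive integer, $r\ge2$ an integer, $s=p+2r$, and $M=(m_{ij})\in\mathfrak{so}(r,\mathbb{C})$. Let $S$ be the $(r-1)\times r$ matrix $S=\big(I_{r-1}\mid m\big)$ whose last column is $m=(m_{1r},\dots,m_{r-1,r})^t$. Define $\hat\Phi^*:V^*_{ps}(\mathbb{R})\to\mathbb{C}^{(r-1)\times p}$ by $\hat\Phi^*(X)=S(W+M\bar W)Z^{-1}$, where for $X=(X_0;X_1;X_2;X_3)$ (blocks of $p,p,r,r$ rows) $Z=X_0+iX_1$ and $W=X_2+iX_3$. Then $\hat\Phi^*$ is independent of the last row of $X$, thus inducing a map $\Phi^*:V^*_{p,s-1}(\mathbb{R})\to\mathbb{C}^{(r-1)\times p}$, and the complex valued components of $\Phi^*$ form an orthogonal harmonic family of $\mathbf{GL}_p(\mathbb{R})$-invariant functions on $V^*_{p,s-1}(\mathbb{R})$, equipped with the Euclidean metric.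
   Context: $\mathfrak{so}(r,\mathbb{C})$ is the set of complex skew-symmetric $r\times r$ matrices. For $n\ge p$, $U^*_{pn}(\mathbb{R})=\{X\in\mathbb{R}^{(p+n)\times p}: X^tX\text{ invertible}\}$ and $V^*_{pn}(\mathbb{R})=\{X\in U^*_{pn}(\mathbb{R}): \det(X_0+iX_1)\neq0\}$, where $X_0,X_1$ are the first and second blocks of $p$ rows; $V^*_{p,s-1}(\mathbb{R})$ is identified with matrices obtained from elements of $V^*_{ps}(\mathbb{R})$ by deleting the last row. $\mathbf{GL}_p(\mathbb{R})$ acts by right multiplication. The Euclidean metric is $\langle X,Y\rangle=\mathrm{trace}(X^tY)$. For a Riemannian manifold $(M,g)$ and complex functions $\phi,\psi$, $\tau(\phi)$ is the Laplace–Beltrami operator (extended complex-linearly) and $\kappa(\phi,\psi)=g(\mathrm{grad}\,\phi,\mathrm{grad}\,\psi)$ with $g$ extended complex-bilinearly. A set $\Omega$ of complex functions is an orthogonal harmonic family if $\tau(\phi)=0$ and $\kappa(\phi,\psi)=0$ for all $\phi,\psi\in\Omega$. *)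

From HB Require Import structures.
From mathcomp Require Import all_boot all_order all_algebra.
From mathcomp Require Import all_classical all_reals all_analysis.
From mathcomp Require Import complex.

Set Implicit Arguments.
Unset Strict Implicit.
Unset Printing Implicit Defensive.

Import Order.TTheory GRing.Theory Num.Theory.
Import numFieldNormedType.Exports.
Local Open Scope ring_scope.

Section Defs.
Variable R : realType.

(* Elements X of R^{(p+s) x p} with s = p + 2r, written in blocks of
   p, p, r, r rows:  X = (X0; X1; X2; X3). *)
Definition blk0 p r (X : 'M[R]_(p + p + r + r, p)) : 'M[R]_(p, p) :=
  usubmx (usubmx (usubmx X)).
Definition blk1 p r (X : 'M[R]_(p + p + r + r, p)) : 'M[R]_(p, p) :=
  dsubmx (usubmx (usubmx X)).
Definition blk2 p r (X : 'M[R]_(p + p + r + r, p)) : 'M[R]_(r, p) :=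
  dsubmx (usubmx X).
Definition blk3 p r (X : 'M[R]_(p + p + r + r, p)) : 'M[R]_(r, p) :=
  dsubmx X.

Definition cplx m n (A B : 'M[R]_(m, n)) : 'M[R[i]]_(m, n) :=
  \matrix_(a, b) (A a b +i* B a b)%C.

Definition conjmx m n (A : 'M[R[i]]_(m, n)) : 'M[R[i]]_(m, n) :=
  map_mx (@conjc R) A.

Definition Zof p r (X : 'M[R]_(p + p + r + r, p)) := cplx (blk0 X) (blk1 X).
Definition Wof p r (X : 'M[R]_(p + p + r + r, p)) := cplx (blk2 X) (blk3 X).

Definition inU m p (X : 'M[R]_(m, p)) : Prop := (X^T *m X) \in unitmx.

Definition inV p r (X : 'M[R]_(p + p + r + r, p)) : Prop :=
  inU X /\ \det (Zof X) != 0.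

Lemma droplast_le p r : (p + p + r + r.-1 <= p + p + r + r)%N.
Proof. by rewrite leq_add2l leq_pred. Qed.

Definition droplast p r (X : 'M[R]_(p + p + r + r, p))
  : 'M[R]_(p + p + r + r.-1, p) :=
  \matrix_(a, b) X (widen_ord (@droplast_le p r) a) b.

Definition inV' p r (Y : 'M[R]_(p + p + r + r.-1, p)) : Prop :=
  exists X : 'M[R]_(p + p + r + r, p), inV X /\ droplast X = Y.

Definition skew_cplx r (M : 'M[R[i]]_r) : Prop := M^T = - M.

(* S = (I_{r-1} | m),  m = (m_{1r}, ..., m_{r-1,r})^t *)
Definition Smx r (M : 'M[R[i]]_r) : 'M[R[i]]_(r.-1, r) :=
  \matrix_(a, b)
    (if nat_of_ord b == nat_of_ord a then 1
     else if nat_of_ord b == r.-1 then M (widen_ord (leq_pred r) a) b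
     else 0).

Definition hatPhi p r (M : 'M[R[i]]_r) (X : 'M[R]_(p + p + r + r, p))
  : 'M[R[i]]_(r.-1, p) :=
  Smx M *m (Wof X + M *m conjmx (Wof X)) *m invmx (Zof X).

Definition rpartial n p (a : 'I_n) (b : 'I_p) (F : 'M[R]_(n, p) -> R)
  : 'M[R]_(n, p) -> R :=
  fun Y => derive F Y (delta_mx a b).

(* complex-valued functions: derivatives extended complex-linearly *)
Definition cRe n p (f : 'M[R]_(n, p) -> R[i]) : 'M[R]_(n, p) -> R :=
  fun Y => complex.Re (f Y).
Definition cIm n p (f : 'M[R]_(n, p) -> R[i]) : 'M[R]_(n, p) -> R :=
  fun Y => complex.Im (f Y).

Definition cpartial n p (a : 'I_n) (b : 'I_p) (f : 'M[R]_(n, p) -> R[i])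
  : 'M[R]_(n, p) -> R[i] :=
  fun Y => (rpartial a b (cRe f) Y +i* rpartial a b (cIm f) Y)%C.

Definition C2_at n p (f : 'M[R]_(n, p) -> R[i]) (Y : 'M[R]_(n, p)) : Prop :=
  forall (a : 'I_n) (b : 'I_p),
    [/\ derivable (cRe f) Y (delta_mx a b), derivable (cIm f) Y (delta_mx a b),
        derivable (rpartial a b (cRe f)) Y (delta_mx a b) &
        derivable (rpartial a b (cIm f)) Y (delta_mx a b)].

Definition tau n p (f : 'M[R]_(n, p) -> R[i]) (Y : 'M[R]_(n, p)) : R[i] :=
  \sum_(a < n) \sum_(b < p) cpartial a b (cpartial a b f) Y.

Definition kappa n p (f g : 'M[R]_(n, p) -> R[i]) (Y : 'M[R]_(n, p)) : R[i] :=
  \sum_(a < n) \sum_(b < p) cpartial a b f Y * cpartial a b g Y.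

Definition orthogonal_harmonic_family n p (I : Type)
  (Omega : I -> 'M[R]_(n, p) -> R[i]) (D : 'M[R]_(n, p) -> Prop) : Prop :=
  forall Y, D Y ->
    (forall i, C2_at (Omega i) Y /\ tau (Omega i) Y = 0) /\
    (forall i j, kappa (Omega i) (Omega j) Y = 0).

Definition GL_invariant n p (f : 'M[R]_(n, p) -> R[i])
  (D : 'M[R]_(n, p) -> Prop) : Prop :=
  forall Y (g : 'M[R]_p), D Y -> g \in unitmx -> f (Y *m g) = f Y.

End Defs.

(* Phi can be computed explicitly along every coordinate line t |-> Y + t E
   of V*_{p,s-1}.  When E moves W, Phi is affine in t, since
   S (W + M conj W) = (S + S M) X2 + i (S - S M) X3.  When E moves Z by
   c [delta_mx a b] with c = 1 or c = i, the Sherman--Morrison formula makes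
   Phi a Moebius function of t, whose second derivative at 0 is proportional
   to c^2.  Hence the second derivatives cancel pairwise or vanish (tau = 0),
   and so do the Z-contributions to kappa; the W-contributions add up to
   entries of (S + S M)(S + S M)^T - (S - S M)(S - S M)^T = 2 S (M + M^T) S^T,
   which is 0 for M skew.  The last column of S - S M vanishes because
   m_rr = 0: this is why the deleted row of X3 is invisible, both to
   hatPhi and in the sum defining kappa.  Right multiplication by g in GL_p
   multiplies Z and W on the right by g, which cancels in W Z^-1. *)

From Pilot Require Import Defs.
From HB Require Import structures.
From mathcomp Require Import all_boot all_order all_algebra.
From mathcomp Require Import all_classical all_reals all_analysis.
From mathcomp Require Import complex.
From mathcomp Require Import ring zify.

Set Implicit Arguments.
Unset Strict Implicit.
Unset Printing Implicit Defensive.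
Import Order.TTheory GRing.Theory Num.Theory.
Import numFieldNormedType.Exports.
Local Open Scope ring_scope.
Local Open Scope complex_scope.

Section ComplexParts.
Variable R : rcfType.
Local Notation Re := (@complex.Re R).
Local Notation Im := (@complex.Im R).

Lemma complex_ext (x y : R[i]) : Re x = Re y -> Im x = Im y -> x = y.
Proof. by case: x => a b; case: y => c d /= -> ->. Qed.

Lemma Re_add (x y : R[i]) : Re (x + y) = Re x + Re y.
Proof. by case: x; case: y. Qed.
Lemma Im_add (x y : R[i]) : Im (x + y) = Im x + Im y.
Proof. by case: x; case: y. Qed.
Lemma Re_opp (x : R[i]) : Re (- x) = - Re x.
Proof. by case: x. Qed.
Lemma Im_opp (x : R[i]) : Im (- x) = - Im x.
Proof. by case: x. Qed.
Lemma Re_mul (x y : R[i]) : Re (x * y) = Re x * Re y - Im x * Im y.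
Proof. by case: x; case: y. Qed.
Lemma Im_mul (x y : R[i]) : Im (x * y) = Re x * Im y + Im x * Re y.
Proof. by case: x; case: y. Qed.
Lemma Re_inv (x : R[i]) : Re x^-1 = Re x / (Re x ^+ 2 + Im x ^+ 2).
Proof. by case: x. Qed.
Lemma Im_inv (x : R[i]) : Im x^-1 = - Im x / (Re x ^+ 2 + Im x ^+ 2).
Proof. by case: x => a b /=; rewrite mulNr. Qed.
Lemma Re_conj (x : R[i]) : Re x^* = Re x.
Proof. by case: x. Qed.
Lemma Im_conj (x : R[i]) : Im x^* = - Im x.
Proof. by case: x. Qed.

Definition complex_parts :=
  (Re_add, Im_add, Re_opp, Im_opp, Re_mul, Im_mul, Re_conj, Im_conj).

Lemma sqr_Re_add_sqr_Im_eq0 (x : R[i]) :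
  (Re x ^+ 2 + Im x ^+ 2 == 0) = (x == 0).
Proof.
case: x => a b /=; rewrite paddr_eq0 ?sqr_ge0 // !sqrf_eq0.
by rewrite eq_complex.
Qed.

Lemma complex_mul_real (a b x : R) : (a +i* b) * x%:C = (a * x) +i* (b * x).
Proof. by apply: complex_ext; rewrite !complex_parts /=; ring. Qed.

Lemma complex_sum (I : Type) (s : seq I) (P : pred I) (F G : I -> R) :
  (\sum_(i <- s | P i) F i) +i* (\sum_(i <- s | P i) G i) =
  \sum_(i <- s | P i) (F i +i* G i).
Proof. by elim/big_rec3: _ => // i x y z _ <-. Qed.

Lemma mul_i_mul_i (x y : R[i]) : ('i * x) * ('i * y) = - (x * y).
Proof. by rewrite mulrACA -expr2 sqr_i mulN1r. Qed.

End ComplexParts.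

Section ComplexLineDerivative.
Variable R : realType.
Local Notation Re := (@complex.Re R).
Local Notation Im := (@complex.Im R).

Lemma is_derive_ext (f g : R -> R) (x v df dg : R) :
  is_derive x v f df -> f =1 g -> df = dg -> is_derive x v g dg.
Proof. by move=> ? /funext <- <-. Qed.

Definition is_cderive (t : R) (f : R -> R[i]) (d : R[i]) : Prop :=
  is_derive t (1 : R) (fun s => Re (f s)) (Re d) /\
  is_derive t (1 : R) (fun s => Im (f s)) (Im d).

Lemma is_cderive_eq t f d d' : is_cderive t f d -> d = d' -> is_cderive t f d'.
Proof. by move=> ? <-. Qed.

Lemma near_eq_is_cderive t (f g : R -> R[i]) d :
  (\forall s \near t, f s = g s) -> is_cderive t f d -> is_cderive t g d.
Proof.
by move=> fg [? ?]; split; apply: near_eq_is_derive; do ?apply: filterS fg => s ->.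
Qed.

Lemma is_cderive_cst t (c : R[i]) : is_cderive t (fun=> c) 0.
Proof. by split; apply: is_derive_eq (is_derive_cst _ _ _) _. Qed.

Lemma is_cderive_line t (w : R[i]) : is_cderive t (fun s => s%:C * w) w.
Proof.
have lin (k : R) : is_derive t (1 : R) (fun s => k * s) k.
  have := is_deriveZ k (is_derive_id t (1 : R)).
  by move/is_derive_ext; apply=> [//|]; rewrite /GRing.scale /= mulr1.
by split; apply: is_derive_ext (lin _) _ _ => // s;
  rewrite complex_parts /= mul0r ?subr0 ?addr0 mulrC.
Qed.

Lemma is_cderiveD t f g d e : is_cderive t f d -> is_cderive t g e ->
  is_cderive t (fun s => f s + g s) (d + e).
Proof.
move=> [f1 f2] [g1 g2]; split.
  by apply: is_derive_ext (is_deriveD f1 g1) _ _ => [s|]; rewrite Re_add.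
by apply: is_derive_ext (is_deriveD f2 g2) _ _ => [s|]; rewrite Im_add.
Qed.

Lemma is_cderive_affine t (a w : R[i]) : is_cderive t (fun s => a + s%:C * w) w.
Proof.
exact: is_cderive_eq (is_cderiveD (is_cderive_cst _ _) (is_cderive_line _ _)) (add0r _).
Qed.

Lemma is_cderiveN t f d : is_cderive t f d -> is_cderive t (fun s => - f s) (- d).
Proof.
move=> [f1 f2]; split.
  by apply: is_derive_ext (is_deriveN f1) _ _ => [s|]; rewrite Re_opp.
by apply: is_derive_ext (is_deriveN f2) _ _ => [s|]; rewrite Im_opp.
Qed.

Lemma is_cderiveM t f g d e : is_cderive t f d -> is_cderive t g e ->
  is_cderive t (fun s => f s * g s) (d * g t + f t * e).
Proof.
move=> [f1 f2] [g1 g2]; split.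
  apply: is_derive_ext (is_deriveB (is_deriveM f1 g1) (is_deriveM f2 g2)) _ _.
    by move=> s; rewrite Re_mul.
  by rewrite /GRing.scale /= !complex_parts; ring.
apply: is_derive_ext (is_deriveD (is_deriveM f1 g2) (is_deriveM f2 g1)) _ _.
  by move=> s; rewrite Im_mul.
by rewrite /GRing.scale /= !complex_parts; ring.
Qed.

Lemma is_cderiveV t f d : f t != 0 -> is_cderive t f d ->
  is_cderive t (fun s => (f s)^-1) (- d / f t / f t).
Proof.
move=> ft0 [f1 f2].
have n2_0 : Re (f t) * Re (f t) + Im (f t) * Im (f t) != 0.
  by rewrite -!expr2 sqr_Re_add_sqr_Im_eq0.
have n2V := @is_deriveV _
  (fun s => Re (f s) * Re (f s) + Im (f s) * Im (f s)) t _ _ n2_0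
  (is_deriveD (is_deriveM f1 f1) (is_deriveM f2 f2)).
split.
  apply: is_derive_ext (is_deriveM f1 n2V) _ _ => [s|].
    by rewrite Re_inv /= !expr2.
  rewrite /GRing.scale /= !(complex_parts, Re_inv, Im_inv) /GRing.exp /=.
  by field.
have f2N : is_derive t 1 (fun s => - Im (f s)) (- Im d).
  exact: is_derive_ext (is_deriveN f2) _ _.
apply: is_derive_ext (is_deriveM f2N n2V) _ _ => [s|].
  by rewrite Im_inv /= !expr2.
rewrite /GRing.scale /= !(complex_parts, Re_inv, Im_inv) /GRing.exp /=.
by field.
Qed.

Lemma is_cderive_neq0_near t f d : is_cderive t f d -> f t != 0 ->
  \forall s \near t, f s != 0.
Proof.
have cont (g : R -> R) e : is_derive t (1 : R) g e -> (g @ t --> g t)%classic.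
  by case=> /derivable1_diffP /differentiable_continuous.
move=> [/cont f1 /cont f2]; rewrite -sqr_Re_add_sqr_Im_eq0 paddr_eq0 ?sqr_ge0 //.
rewrite negb_and !sqrf_eq0 => /orP[re0|im0].
  by apply: filterS (cvgr_neq0 _ f1 re0) => s; apply: contra => /eqP ->.
by apply: filterS (cvgr_neq0 _ f2 im0) => s; apply: contra => /eqP ->.
Qed.

End ComplexLineDerivative.

Section LineDerivative.
Variables (R : realType) (V W : normedModType R).

Lemma is_derive_along_line (F : V -> W) (Y E : V) (s : R) (d : W) :
  is_derive s (1 : R) (fun t => F (t *: E + Y)) d -> is_derive (s *: E + Y) E F d.
Proof.
move=> [dF dE].
have quotE :
    (fun h : R => h^-1 *: ((F \o shift (s *: E + Y)) (h *: E) - F (s *: E + Y))) =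
    (fun h : R => h^-1 *: (((fun t => F (t *: E + Y)) \o shift s) (h *: 1)
                           - F (s *: E + Y))).
  by apply/funext => h /=; rewrite scaler1 scalerDl addrA.
by split; rewrite /derivable /derive quotE; [exact: dF | exact: dE].
Qed.

End LineDerivative.

Section CoordinatePartials.
Variables (R : realType) (n p : nat).
Local Notation Re := (@complex.Re R).
Local Notation Im := (@complex.Im R).

Definition C2_along (f : 'M[R]_(n, p) -> R[i]) (Y : 'M[R]_(n, p)) a b : Prop :=
  [/\ derivable (cRe f) Y (delta_mx a b), derivable (cIm f) Y (delta_mx a b),
      derivable (rpartial a b (cRe f)) Y (delta_mx a b) &
      derivable (rpartial a b (cIm f)) Y (delta_mx a b)].

Lemma cpartial_line (f : 'M[R]_(n, p) -> R[i]) Y a b (d1 : R -> R[i]) d2 :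
  (\forall s \near 0, is_cderive s (fun t => f (t *: delta_mx a b + Y)) (d1 s)) ->
  is_cderive 0 d1 d2 ->
  [/\ C2_along f Y a b, cpartial a b f Y = d1 0 &
      cpartial a b (cpartial a b f) Y = d2].
Proof.
set E := delta_mx a b => d1P d2P.
have along s : is_cderive s (fun t => f (t *: E + Y)) (d1 s) ->
    [/\ is_derive (s *: E + Y) E (cRe f) (Re (d1 s)),
        is_derive (s *: E + Y) E (cIm f) (Im (d1 s)) &
        cpartial a b f (s *: E + Y) = d1 s].
  move=> [/(@is_derive_along_line _ _ _ (cRe f)) re
          /(@is_derive_along_line _ _ _ (cIm f)) im].
  split=> //.
  by rewrite /cpartial /rpartial !derive_val; case: (d1 s).
have [re1 im1 <-] := along 0 (nbhs_singleton d1P).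
have d1E : \forall s \near 0, d1 s = cpartial a b f (s *: E + Y).
  by apply: filterS d1P => s /along [_ _ ->].
have [/(@is_derive_along_line _ _ _ (cRe (cpartial a b f))) re2
      /(@is_derive_along_line _ _ _ (cIm (cpartial a b f))) im2] :=
  near_eq_is_cderive d1E d2P.
rewrite !scale0r !add0r in re1 im1 re2 im2 *.
split=> //.
by rewrite /cpartial /rpartial !derive_val; case: d2 {d2P re2 im2}.
Qed.

End CoordinatePartials.

Section Mobius.
Variables (R : realType) (c z P Q : R[i]).

Definition mobius_den (t : R) : R[i] := 1 + t%:C * (c * z).
Definition mobius (t : R) : R[i] := P - t%:C * c / mobius_den t * Q.
Definition mobius' (t : R) : R[i] := - (c * Q) / mobius_den t ^+ 2.

Lemma mobius_den0 : mobius_den 0 = 1.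
Proof. by rewrite /mobius_den rmorph0 mul0r addr0. Qed.

Lemma is_cderive_mobius_den s : is_cderive s mobius_den (c * z).
Proof. exact: is_cderive_affine. Qed.

Lemma mobius_den_neq0_near : \forall s \near 0, mobius_den s != 0.
Proof.
apply: is_cderive_neq0_near (is_cderive_mobius_den 0) _.
by rewrite mobius_den0 oner_neq0.
Qed.

Lemma is_cderive_mobius s : mobius_den s != 0 -> is_cderive s mobius (mobius' s).
Proof.
move=> den0; have denV := is_cderiveV den0 (is_cderive_mobius_den s).
have := is_cderiveD (is_cderive_cst s P) (is_cderiveN
  (is_cderiveM (is_cderiveM (is_cderive_line s c) denV) (is_cderive_cst s Q))).
move/is_cderive_eq; apply; rewrite /mobius' /mobius_den in den0 *.
by field.
Qed.

Lemma is_cderive_mobius' : is_cderive 0 mobius' (2%:R * c ^+ 2 * z * Q).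
Proof.
have den0 : mobius_den 0 != 0 by rewrite mobius_den0 oner_neq0.
have denV := is_cderiveV den0 (is_cderive_mobius_den 0).
have := is_cderiveM (is_cderive_cst 0 (- (c * Q))) (is_cderiveM denV denV).
move=> h; apply: is_cderive_eq (near_eq_is_cderive _ h) _.
  by apply: filterE => s; rewrite /mobius' expr2 invfM.
by rewrite mobius_den0 invr1; ring.
Qed.

End Mobius.

Section RankOneUpdate.
Variable K : fieldType.

Lemma mul_delta_mx_entry m n q s (P : 'M[K]_(m, n)) (Q : 'M[K]_(q, s)) i j x y :
  (P *m delta_mx i j *m Q) x y = P x i * Q j y.
Proof.
rewrite -(mul_delta_mx (0 : 'I_1)) mulmxA -colE -mulmxA -rowE.
by rewrite !mxE big_ord1 !mxE.
Qed.

Lemma delta_mx_mul_delta_mx m n (A : 'M[K]_(m, n)) (i : 'I_n) (j : 'I_m) :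
  delta_mx i j *m A *m delta_mx i j = A j i *: delta_mx i j.
Proof.
have -> : delta_mx i j *m A *m delta_mx i j =
    1%:M *m delta_mx i j *m (A *m delta_mx i j *m 1%:M).
  by rewrite mul1mx mulmx1 mulmxA.
apply/matrixP => x y; rewrite !mul_delta_mx_entry !mxE.
rewrite [j == y]eq_sym.
by case: (x == i); case: (y == j); rewrite ?mulr1 ?mulr0 ?mul0r ?mul1r.
Qed.

Lemma mulmx1_invmx n (A B : 'M[K]_n) : A *m B = 1%:M -> invmx A = B.
Proof.
move=> AB1; have [Au _] := mulmx1_unit AB1.
by rewrite -[invmx A]mulmx1 -AB1 mulmxA (mulVmx Au) mul1mx.
Qed.

Lemma invmxM n (A B : 'M[K]_n) :
  A \in unitmx -> B \in unitmx -> invmx (A *m B) = invmx B *m invmx A.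
Proof.
by move=> Au Bu; apply: mulmx1_invmx; rewrite mulmxA mulmxK // mulmxV.
Qed.

Variables (n : nat) (Z : 'M[K]_n) (w : K) (i j : 'I_n).
Hypotheses (Zu : Z \in unitmx) (nz : 1 + w * invmx Z j i != 0).

Lemma mulmx_add_delta_inv :
  (Z + w *: delta_mx i j) *m (invmx Z -
    (w / (1 + w * invmx Z j i)) *: (invmx Z *m delta_mx i j *m invmx Z)) = 1%:M.
Proof.
rewrite mulmxDl !mulmxBr -!scalemxAr -!scalemxAl !mulmxA (mulmxV Zu) mul1mx.
rewrite delta_mx_mul_delta_mx !scalemxAl !scalerA -!scalemxAl -scalerBl.
suff -> : w - w / (1 + w * invmx Z j i) * w * invmx Z j i =
          w / (1 + w * invmx Z j i) by rewrite subrK.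
by field.
Qed.

Lemma invmx_add_delta :
  invmx (Z + w *: delta_mx i j) =
  invmx Z - (w / (1 + w * invmx Z j i)) *: (invmx Z *m delta_mx i j *m invmx Z).
Proof. exact/mulmx1_invmx/mulmx_add_delta_inv. Qed.

Lemma unitmx_add_delta : Z + w *: delta_mx i j \in unitmx.
Proof. by have [] := mulmx1_unit mulmx_add_delta_inv. Qed.

End RankOneUpdate.

Lemma unitmx_trmx_mul (R : realFieldType) m n (X : 'M[R]_(m, n)) :
  (forall v : 'cV_n, X *m v = 0 -> v = 0) -> X^T *m X \in unitmx.
Proof.
move=> Xinj; rewrite -row_free_unit; apply: inj_row_free => v vXX0.
set w := X *m v^T.
have w0 : w = 0.
  have : (w^T *m w) 0 0 = 0.
    by rewrite trmx_mul trmxK !mulmxA -(mulmxA v) vXX0 mul0mx mxE.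
  rewrite mxE => /eqP; rewrite psumr_eq0 => [|i _]; last first.
    by rewrite mxE -expr2 sqr_ge0.
  move=> /allP sq0; apply/matrixP => i j; rewrite (ord1 j) [RHS]mxE.
  have /implyP/(_ isT) := sq0 i (mem_index_enum i).
  by rewrite mxE mulf_eq0 orbb => /eqP.
by apply: trmx_inj; rewrite (Xinj _ w0) trmx0.
Qed.

Lemma skew_mx_diag (C : numDomainType) n (A : 'M[C]_n) :
  A^T = - A -> forall x, A x x = 0.
Proof.
move=> /matrixP hA x; have := hA x x; rewrite !mxE => /eqP.
by rewrite -addr_eq0 -mulr2n mulrn_eq0 /= => /eqP.
Qed.

Section ReducedSkew.
Variables (R : realType) (r : nat) (M : 'M[R[i]]_r.+1).
Hypothesis hM : skew_cplx M.
Local Notation wd := (widen_ord (leqnSn r)).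
Local Notation S := (Smx M).
Local Notation T := (Smx M *m M).

Lemma Smx_widen (j l : 'I_r) : S j (wd l) = (l == j)%:R.
Proof.
rewrite mxE /= -val_eqE /=.
by case: eqP => [//|_]; have := ltn_ord l; case: eqP => //= ->; lia.
Qed.

Lemma Smx_max (j : 'I_r) : S j ord_max = M (wd j) ord_max.
Proof.
rewrite mxE /=; have := ltn_ord j; case: eqP => [/= ?|_ _]; first lia.
by rewrite eqxx; congr (M _ _); apply: val_inj.
Qed.

Lemma mul_Smx k (A : 'M[R[i]]_(r.+1, k)) j l :
  (S *m A) j l = A (wd j) l + M (wd j) ord_max * A ord_max l.
Proof.
rewrite mxE big_ord_recr /= Smx_max; congr (_ + _).
rewrite (bigD1 j) //= big1 ?addr0 => [|k' /negbTE nk].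
  by rewrite Smx_widen eqxx mul1r.
by rewrite Smx_widen nk mul0r.
Qed.

Lemma Smx_subM_max (j : 'I_r) : (S - T) j ord_max = 0.
Proof.
rewrite [LHS]mxE [(- T) _ _]mxE mul_Smx (skew_mx_diag hM) mulr0 addr0.
by rewrite Smx_max subrr.
Qed.

Lemma Smx_addM_gram : (S + T) *m (S + T)^T = (S - T) *m (S - T)^T.
Proof.
have cross : S *m T^T = - (T *m S^T).
  by rewrite trmx_mul hM mulNmx mulmxN mulmxA.
rewrite raddfD raddfB /= mulmxDl !mulmxDr mulmxBl mulmxN mulmxBl cross.
by congr (_ + _); rewrite opprB opprK addrC.
Qed.

Lemma Smx_addM_dot (j j' : 'I_r) :
  \sum_(l < r.+1) (S + T) j l * (S + T) j' l =
  \sum_(l < r) (S - T) j (wd l) *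
               (S - T) j' (wd l).
Proof.
have /matrixP /(_ j j') := Smx_addM_gram; rewrite [LHS]mxE [RHS]mxE.
under eq_bigr do rewrite [_^T _ _]mxE; under [RHS]eq_bigr do rewrite [_^T _ _]mxE.
by move=> ->; rewrite big_ord_recr /= Smx_subM_max mul0r addr0.
Qed.

End ReducedSkew.

Section Padding.
Variables (C : pzRingType) (m n p : nat).

Definition padmx (Y : 'M[C]_(m, p)) : 'M[C]_(n, p) :=
  \matrix_(i, j) oapp (fun k : 'I_m => Y k j) 0 (insub (val i)).

Lemma padmxE Y (i : 'I_n) (k : 'I_m) j : val i = val k -> padmx Y i j = Y k j.
Proof.
move=> ik; rewrite mxE insubT ?ik //= => ?.
by congr (Y _ j); apply: val_inj.
Qed.

Lemma padmx_linear (a : C) Y1 Y2 : padmx (a *: Y1 + Y2) = a *: padmx Y1 + padmx Y2.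
Proof.
apply/matrixP => i j; rewrite !mxE.
by case: insubP => [k _ _|_] /=; rewrite ?mxE // mulr0 addr0.
Qed.

Lemma padmx_delta (le_mn : (m <= n)%N) a b :
  padmx (delta_mx a b) = delta_mx (widen_ord le_mn a) b.
Proof.
apply/matrixP => i j; rewrite mxE; case: insubP => [k _ ik|] /=.
  by rewrite !mxE -val_eqE /= ik.
apply: contraNeq; rewrite !mxE => /eqP; case: (i == _) / eqP => [-> _|]; last by [].
by rewrite /= ltn_ord.
Qed.

End Padding.

Section ComplexMatrices.
Variable R : realType.
Local Notation cmx := (map_mx (real_complex R)).

Lemma cplxE m n (A B : 'M[R]_(m, n)) : cplx A B = cmx A + 'i *: cmx B.
Proof.
apply/matrixP => x y; rewrite !mxE /=.
by apply: complex_ext; rewrite !complex_parts /=; ring.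
Qed.

Lemma conjmx_cplx m n (A B : 'M[R]_(m, n)) :
  Defs.conjmx (cplx A B) = cmx A - 'i *: cmx B.
Proof.
apply/matrixP => x y; rewrite !mxE /=.
by apply: complex_ext; rewrite !complex_parts /=; ring.
Qed.

Lemma cplx_mulmx_real m n k (A B : 'M[R]_(m, n)) (G : 'M[R]_(n, k)) :
  cplx A B *m cmx G = cplx (A *m G) (B *m G).
Proof.
apply/matrixP => x y; rewrite !mxE complex_sum; apply: eq_bigr => l _.
by rewrite !mxE complex_mul_real.
Qed.

Lemma cplx_linear m n (t : R) (A1 B1 A2 B2 : 'M[R]_(m, n)) :
  cplx (t *: A1 + A2) (t *: B1 + B2) = t%:C *: cplx A1 B1 + cplx A2 B2.
Proof. by rewrite !cplxE !map_mxD !map_mxZ !scalerDr !scalerA addrACA (mulrC 'i). Qed.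

Lemma mulmx_cplx_conj q r k (S : 'M[R[i]]_(q, r)) (M : 'M[R[i]]_r)
    (A B : 'M[R]_(r, k)) :
  S *m (cplx A B + M *m Defs.conjmx (cplx A B)) =
  (S + S *m M) *m cmx A + 'i *: ((S - S *m M) *m cmx B).
Proof.
rewrite conjmx_cplx cplxE !mulmxDr !mulmxN -!scalemxAr !mulmxA.
by rewrite mulmxDl mulmxDl mulNmx scalerBr addrACA.
Qed.

End ComplexMatrices.

Section Blocks.
Variables (R : realType) (p r : nat).
Local Notation N' := (p + p + r.+1 + r)%N.
Local Notation N := (p + p + r.+1 + r.+1)%N.
Local Notation cmx := (map_mx (real_complex R)).
Local Notation padmx := (@padmx R N' N p).

Lemma droplast_padmx (Y : 'M[R]_(N', p)) : droplast (padmx Y) = Y.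
Proof. by apply/matrixP => i j; rewrite mxE (padmxE _ (k := i)). Qed.

Lemma padmx_droplast (X : 'M[R]_(N, p)) i j : (val i < N')%N ->
  padmx (droplast X) i j = X i j.
Proof.
move=> iN; rewrite (padmxE _ (k := Ordinal iN)) // mxE.
by congr (X _ j); apply: val_inj.
Qed.

Lemma blk0E (X : 'M[R]_(N, p)) x y :
  blk0 X x y = X (lshift r.+1 (lshift r.+1 (lshift p x))) y.
Proof. by rewrite !mxE. Qed.
Lemma blk1E (X : 'M[R]_(N, p)) x y :
  blk1 X x y = X (lshift r.+1 (lshift r.+1 (rshift p x))) y.
Proof. by rewrite !mxE. Qed.
Lemma blk2E (X : 'M[R]_(N, p)) x y :
  blk2 X x y = X (lshift r.+1 (rshift (p + p) x)) y.
Proof. by rewrite !mxE. Qed.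

Lemma Zof_padmx_droplast (X : 'M[R]_(N, p)) : Zof (padmx (droplast X)) = Zof X.
Proof.
apply/matrixP => x y; rewrite [LHS]mxE [RHS]mxE !blk0E !blk1E.
by rewrite !padmx_droplast //=; have := ltn_ord x; lia.
Qed.

Lemma Zof_mulmx (X : 'M[R]_(N, p)) (g : 'M[R]_p) : Zof (X *m g) = Zof X *m cmx g.
Proof. by rewrite /Zof cplx_mulmx_real /blk0 /blk1 !(mul_usub_mx, mul_dsub_mx). Qed.

Lemma inU_of_Zof (X : 'M[R]_(N, p)) : \det (Zof X) != 0 -> inU X.
Proof.
move=> detZ; apply: unitmx_trmx_mul => v Xv0.
have Zu : Zof X \in unitmx by rewrite unitmxE unitfE.
have : Zof X *m cmx v = 0.
  rewrite cplx_mulmx_real /blk0 /blk1 !(mul_usub_mx, mul_dsub_mx) Xv0.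
  by rewrite !linear0 cplxE !map_mx0 scaler0 addr0.
move=> /(congr1 (mulmx (invmx (Zof X)))); rewrite mulKmx // mulmx0 => /matrixP v0.
by apply/matrixP => i j; have := v0 i j; rewrite !mxE => -[].
Qed.

Lemma inV'_padmx (Y : 'M[R]_(N', p)) : inV' Y <-> \det (Zof (padmx Y)) != 0.
Proof.
split=> [[X [[_ detZ] <-]]|detZ]; first by rewrite Zof_padmx_droplast.
by exists (padmx Y); rewrite droplast_padmx; split=> //; split=> //; apply: inU_of_Zof.
Qed.

Variable M : 'M[R[i]]_r.+1.
Local Notation S := (Smx M).
Local Notation T := (Smx M *m M).

Lemma hatPhiE (X : 'M[R]_(N, p)) : hatPhi M X =
  ((S + T) *m cmx (blk2 X) + 'i *: ((S - T) *m cmx (blk3 X))) *m invmx (Zof X).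
Proof. by rewrite /hatPhi mulmx_cplx_conj. Qed.

Lemma Phi_padmx (Phi : 'M[R]_(N', p) -> 'M[R[i]]_(r, p)) Y :
  (forall X, inV X -> Phi (droplast X) = hatPhi M X) ->
  inV' Y -> Phi Y = hatPhi M (padmx Y).
Proof.
move=> PhiE /inV'_padmx detZ.
by rewrite -PhiE ?droplast_padmx //; split=> //; apply: inU_of_Zof.
Qed.

Lemma hatPhi_droplast (hM : skew_cplx M) (X X' : 'M[R]_(N, p)) :
  droplast X = droplast X' -> hatPhi M X = hatPhi M X'.
Proof.
move=> dX; have XE i j : (val i < N')%N -> X i j = X' i j.
  by move=> iN; rewrite -(padmx_droplast X j iN) -(padmx_droplast X' j iN) dX.
rewrite !hatPhiE -(Zof_padmx_droplast X) dX Zof_padmx_droplast.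
have -> : blk2 X = blk2 X'.
  by apply/matrixP => x y; rewrite !blk2E XE //=; have := ltn_ord x; lia.
(* the last row of [X3] only meets the last column of [S - T], which is zero *)
suff -> : (S - T) *m cmx (blk3 X) = (S - T) *m cmx (blk3 X') by [].
apply/matrixP => j k; rewrite [LHS]mxE [RHS]mxE !big_ord_recr /= Smx_subM_max //.
rewrite !mul0r !addr0; apply: eq_bigr => l _; congr (_ * _).
by rewrite !mxE XE //=; have := ltn_ord l; lia.
Qed.

End Blocks.

Section GLInvariance.
Variables (R : realType) (p r : nat) (M : 'M[R[i]]_r.+1).
Local Notation N := (p + p + r.+1 + r.+1)%N.
Local Notation cmx := (map_mx (real_complex R)).

Lemma hatPhi_mulmx (X : 'M[R]_(N, p)) (g : 'M[R]_p) :
  \det (Zof X) != 0 -> g \in unitmx -> hatPhi M (X *m g) = hatPhi M X.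
Proof.
move=> detZ gu; have Zu : Zof X \in unitmx by rewrite unitmxE unitfE.
have gCu : cmx g \in unitmx by rewrite map_unitmx.
rewrite !hatPhiE Zof_mulmx invmxM // /blk2 /blk3 -!(mul_usub_mx, mul_dsub_mx).
by rewrite !map_mxM !mulmxA scalemxAl -mulmxDl mulmxK.
Qed.

Lemma inV_mulmx (X : 'M[R]_(N, p)) (g : 'M[R]_p) :
  inV X -> g \in unitmx -> inV (X *m g).
Proof.
move=> [XtX detZ] gu; split.
  by rewrite /inU trmx_mul -mulmxA (mulmxA X^T) !unitmx_mul unitmx_tr gu XtX.
by rewrite Zof_mulmx det_mulmx mulf_neq0 // det_map_mx fmorph_eq0 -unitfE -unitmxE.
Qed.

Lemma droplast_mulmx (X : 'M[R]_(N, p)) (g : 'M[R]_p) :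
  droplast (X *m g) = droplast X *m g.
Proof. by apply/matrixP => a b; rewrite !mxE; apply: eq_bigr => k _; rewrite mxE. Qed.

End GLInvariance.

Section Lines.
Variables (R : realType) (p r : nat) (M : 'M[R[i]]_r.+1).
Local Notation N := (p + p + r.+1 + r.+1)%N.
Local Notation cmx := (map_mx (real_complex R)).
Local Notation S := (Smx M).
Local Notation T := (Smx M *m M).
Variable X : 'M[R]_(N, p).
Local Notation Zi := (invmx (Zof X)).
Local Notation G := (hatPhi M X).

Lemma Zof_line (E : 'M[R]_(N, p)) (t : R) : Zof (t *: E + X) = t%:C *: Zof E + Zof X.
Proof. by rewrite /Zof /blk0 /blk1 !linearP cplx_linear. Qed.

Lemma hatPhi_line_W (E : 'M[R]_(N, p)) (t : R) : Zof E = 0 ->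
  hatPhi M (t *: E + X) =
  G + t%:C *: (((S + T) *m cmx (blk2 E) + 'i *: ((S - T) *m cmx (blk3 E))) *m Zi).
Proof.
move=> ZE; rewrite !hatPhiE Zof_line ZE scaler0 add0r /blk2 /blk3 !linearP /=.
rewrite !map_mxD !map_mxZ !mulmxDr -!scalemxAr [RHS]addrC [in RHS]scalemxAl -mulmxDl.
by congr (_ *m _); rewrite !scalerDr !scalerA addrACA (mulrC 'i).
Qed.

Lemma hatPhi_line_Z (E : 'M[R]_(N, p)) (c : R[i]) a0 b (t : R) :
  Zof E = c *: delta_mx a0 b -> blk2 E = 0 -> blk3 E = 0 -> Zof X \in unitmx ->
  mobius_den c (Zi b a0) t != 0 ->
  Zof (t *: E + X) \in unitmx /\
  forall j k, hatPhi M (t *: E + X) j k =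
              mobius c (Zi b a0) (G j k) (G j a0 * Zi b k) t.
Proof.
move=> ZE E2 E3 Zu den0.
have ZEX : Zof (t *: E + X) = Zof X + (t%:C * c) *: delta_mx a0 b.
  by rewrite Zof_line ZE scalerA addrC.
have nz : 1 + t%:C * c * Zi b a0 != 0 by rewrite -mulrA.
split=> [|j k]; first by rewrite ZEX unitmx_add_delta.
rewrite !hatPhiE ZEX invmx_add_delta // /blk2 /blk3 !linearP /= -/(blk2 E) -/(blk3 E).
rewrite E2 E3 !scaler0 !add0r mulmxBr -!scalemxAr !mulmxA.
rewrite [LHS]mxE [B in _ + B]mxE [B in _ - B]mxE mul_delta_mx_entry.
by rewrite /mobius /mobius_den (mulrA t%:C c); ring.
Qed.

End Lines.

Section Harmonicity.
Variables (R : realType) (p r : nat) (M : 'M[R[i]]_r.+1).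
Hypothesis hM : skew_cplx M.
Local Notation N' := (p + p + r.+1 + r)%N.
Local Notation N := (p + p + r.+1 + r.+1)%N.
Local Notation cmx := (map_mx (real_complex R)).
Local Notation padmx := (@padmx R N' N p).
Local Notation wd := (widen_ord (leqnSn r)).
Local Notation S := (Smx M).
Local Notation T := (Smx M *m M).
Variable Phi : 'M[R]_(N', p) -> 'M[R[i]]_(r, p).
Hypothesis PhiE : forall X, inV X -> Phi (droplast X) = hatPhi M X.
Variable Y : 'M[R]_(N', p).
Hypothesis hY : inV' Y.
Local Notation X := (padmx Y).
Local Notation Zi := (invmx (Zof X)).
Local Notation G := (hatPhi M X).
Local Notation phi j k := (fun Y' : 'M[R]_(N', p) => Phi Y' j k).

Let Zu : Zof X \in unitmx.
Proof. by rewrite unitmxE unitfE -inV'_padmx. Qed.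

Lemma Phi_line (E : 'M[R]_(N', p)) (t : R) :
  Zof (t *: padmx E + X) \in unitmx ->
  Phi (t *: E + Y) = hatPhi M (t *: padmx E + X).
Proof.
move=> Zu'; rewrite (Phi_padmx PhiE) ?padmx_linear //.
by rewrite inV'_padmx padmx_linear -unitfE -unitmxE.
Qed.

Lemma partials_Zdir (a : 'I_N') b (c : R[i]) a0 j k :
  Zof (padmx (delta_mx a b)) = c *: delta_mx a0 b ->
  blk2 (padmx (delta_mx a b)) = 0 -> blk3 (padmx (delta_mx a b)) = 0 ->
  [/\ C2_along (phi j k) Y a b,
      cpartial a b (phi j k) Y = - (c * (G j a0 * Zi b k)) &
      cpartial a b (cpartial a b (phi j k)) Y =
        2%:R * c ^+ 2 * Zi b a0 * (G j a0 * Zi b k)].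
Proof.
move=> E0 E2 E3.
have d1P : \forall s \near 0, is_cderive s (fun t => Phi (t *: delta_mx a b + Y) j k)
    (mobius' c (Zi b a0) (G j a0 * Zi b k) s).
  apply: filterS (mobius_den_neq0_near c (Zi b a0)) => s den_s.
  apply: near_eq_is_cderive (is_cderive_mobius (G j k) _ den_s).
  apply: filterS (is_cderive_neq0_near (is_cderive_mobius_den c (Zi b a0) s) den_s).
  move=> t den_t; have [Zu' lineE] := hatPhi_line_Z M E0 E2 E3 Zu den_t.
  by rewrite Phi_line // lineE.
have [C2 -> ->] := cpartial_line (f := phi j k) d1P (is_cderive_mobius' _ _ _).
by split=> //; rewrite /mobius' mobius_den0 expr1n divr1.
Qed.

Lemma partials_Wdir (a : 'I_N') b j k :
  Zof (padmx (delta_mx a b)) = 0 ->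
  [/\ C2_along (phi j k) Y a b,
      cpartial a b (phi j k) Y =
        (((S + T) *m cmx (blk2 (padmx (delta_mx a b))) +
          'i *: ((S - T) *m cmx (blk3 (padmx (delta_mx a b))))) *m Zi) j k &
      cpartial a b (cpartial a b (phi j k)) Y = 0].
Proof.
move=> E0; set V := (_ *m Zi) j k.
have lineE t : Phi (t *: delta_mx a b + Y) j k = G j k + t%:C * V.
  rewrite Phi_line ?Zof_line ?E0 ?scaler0 ?add0r // hatPhi_line_W //.
  by rewrite [LHS]mxE [B in _ + B]mxE.
have d1P : \forall s \near 0,
    is_cderive s (fun t => Phi (t *: delta_mx a b + Y) j k) V.
  apply: filterE => s; apply: near_eq_is_cderive (is_cderive_affine _ _ _).
  exact: filterE => t; rewrite lineE.
by have [] := cpartial_line (f := phi j k) d1P (is_cderive_cst 0 V).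
Qed.

(* Row indices of the blocks X0, X1, X2 and X3 of [Y]; X3 has lost its last row. *)
Definition ixZre (a0 : 'I_p) : 'I_N' := lshift r (lshift r.+1 (lshift p a0)).
Definition ixZim (a0 : 'I_p) : 'I_N' := lshift r (lshift r.+1 (rshift p a0)).
Definition ixWre (l : 'I_r.+1) : 'I_N' := lshift r (rshift (p + p) l).
Definition ixWim (l : 'I_r) : 'I_N' := rshift (p + p + r.+1) l.

Let leN : (N' <= N)%N. Proof. by rewrite leq_add2l. Qed.

Lemma padmx_delta_ixZre a0 b : padmx (delta_mx (ixZre a0) b) =
  col_mx (col_mx (col_mx (delta_mx a0 b) 0) 0) 0.
Proof.
rewrite (padmx_delta _ leN) -!delta_mx_ushift; congr delta_mx; exact: val_inj.
Qed.

Lemma padmx_delta_ixZim a0 b : padmx (delta_mx (ixZim a0) b) =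
  col_mx (col_mx (col_mx 0 (delta_mx a0 b)) 0) 0.
Proof.
rewrite (padmx_delta _ leN) -delta_mx_dshift -!delta_mx_ushift.
congr delta_mx; exact: val_inj.
Qed.

Lemma padmx_delta_ixWre l b : padmx (delta_mx (ixWre l) b) =
  col_mx (col_mx (col_mx 0 0) (delta_mx l b)) 0.
Proof.
rewrite col_mx0 (padmx_delta _ leN) -delta_mx_dshift -delta_mx_ushift.
congr delta_mx; exact: val_inj.
Qed.

Lemma padmx_delta_ixWim l b : padmx (delta_mx (ixWim l) b) =
  col_mx (col_mx (col_mx 0 0) 0) (delta_mx (wd l) b).
Proof.
rewrite !col_mx0 (padmx_delta _ leN) -delta_mx_dshift; congr delta_mx; exact: val_inj.
Qed.

Lemma blocks_col_mx (X : 'M[R]_(N, p)) A B C D :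
  X = col_mx (col_mx (col_mx A B) C) D ->
  [/\ Zof X = cplx A B, blk2 X = C & blk3 X = D].
Proof. by move=> ->; rewrite /Zof /blk0 /blk1 /blk2 /blk3 !(col_mxKu, col_mxKd). Qed.

Lemma partials_ixZre a0 b j k :
  [/\ C2_along (phi j k) Y (ixZre a0) b,
      cpartial (ixZre a0) b (phi j k) Y = - (G j a0 * Zi b k) &
      cpartial (ixZre a0) b (cpartial (ixZre a0) b (phi j k)) Y =
        2%:R * Zi b a0 * (G j a0 * Zi b k)].
Proof.
have [ZE E2 E3] := blocks_col_mx (padmx_delta_ixZre a0 b).
rewrite cplxE map_mx0 scaler0 addr0 map_delta_mx -[delta_mx a0 b]scale1r in ZE.
have [C2 -> ->] := partials_Zdir j k ZE E2 E3.
by rewrite mul1r expr1n mulr1.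
Qed.

Lemma partials_ixZim a0 b j k :
  [/\ C2_along (phi j k) Y (ixZim a0) b,
      cpartial (ixZim a0) b (phi j k) Y = - ('i * (G j a0 * Zi b k)) &
      cpartial (ixZim a0) b (cpartial (ixZim a0) b (phi j k)) Y =
        - (2%:R * Zi b a0 * (G j a0 * Zi b k))].
Proof.
have [ZE E2 E3] := blocks_col_mx (padmx_delta_ixZim a0 b).
rewrite cplxE map_mx0 add0r map_delta_mx in ZE.
have [C2 -> ->] := partials_Zdir j k ZE E2 E3.
by rewrite sqr_i mulrN1 !mulNr.
Qed.

Lemma partials_ixWre l b j k :
  [/\ C2_along (phi j k) Y (ixWre l) b,
      cpartial (ixWre l) b (phi j k) Y = (S + T) j l * Zi b k &
      cpartial (ixWre l) b (cpartial (ixWre l) b (phi j k)) Y = 0].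
Proof.
have [ZE E2 E3] := blocks_col_mx (padmx_delta_ixWre l b).
rewrite cplxE !map_mx0 scaler0 addr0 in ZE.
have [C2 -> ->] := partials_Wdir j k ZE.
by rewrite E2 E3 map_delta_mx map_mx0 mulmx0 scaler0 addr0 mul_delta_mx_entry.
Qed.

Lemma partials_ixWim l b j k :
  [/\ C2_along (phi j k) Y (ixWim l) b,
      cpartial (ixWim l) b (phi j k) Y = 'i * ((S - T) j (wd l) * Zi b k) &
      cpartial (ixWim l) b (cpartial (ixWim l) b (phi j k)) Y = 0].
Proof.
have [ZE E2 E3] := blocks_col_mx (padmx_delta_ixWim l b).
rewrite cplxE !map_mx0 scaler0 addr0 in ZE.
have [C2 -> ->] := partials_Wdir j k ZE.
rewrite E2 E3 map_delta_mx map_mx0 mulmx0 add0r -scalemxAl.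
by rewrite [LHS]mxE mul_delta_mx_entry.
Qed.

Lemma C2_at_Phi j k : C2_at (phi j k) Y.
Proof.
move=> a b; case: (split_ordP a) => [a1 ->|l ->].
  2: by case: (partials_ixWim l b j k).
case: (split_ordP a1) => [a2 ->|l ->]; last by case: (partials_ixWre l b j k).
case: (split_ordP a2) => [a0 ->|a0 ->]; first by case: (partials_ixZre a0 b j k).
by case: (partials_ixZim a0 b j k).
Qed.

Lemma tau_Phi j k : tau (phi j k) Y = 0.
Proof.
rewrite /tau !big_split_ord /= [B in _ + B]big1 => [|l _]; last first.
  by apply: big1 => b _; have [_ _ ->] := partials_ixWim l b j k.
rewrite addr0 [B in _ + B]big1 => [|l _]; last first.
  by apply: big1 => b _; have [_ _ ->] := partials_ixWre l b j k.
rewrite addr0 -big_split big1 // => a0 _; rewrite -big_split big1 // => b _.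
have [_ _ ->] := partials_ixZre a0 b j k.
by have [_ _ ->] := partials_ixZim a0 b j k; exact: addrN.
Qed.

Lemma kappa_Phi j k j' k' : kappa (phi j k) (phi j' k') Y = 0.
Proof.
rewrite /kappa !big_split_ord /= -[in X in X + _ + _]big_split big1 => [|a0 _] /=.
  rewrite add0r exchange_big [X in _ + X]exchange_big -big_split big1 // => b _ /=.
  have W2E l : cpartial (ixWre l) b (phi j k) Y * cpartial (ixWre l) b (phi j' k') Y =
      Zi b k * Zi b k' * ((S + T) j l * (S + T) j' l).
    have [_ -> _] := partials_ixWre l b j k.
    by have [_ -> _] := partials_ixWre l b j' k'; ring.
  have W3E l : cpartial (ixWim l) b (phi j k) Y * cpartial (ixWim l) b (phi j' k') Y =
      - (Zi b k * Zi b k' * ((S - T) j (wd l) * (S - T) j' (wd l))).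
    have [_ -> _] := partials_ixWim l b j k.
    have [_ -> _] := partials_ixWim l b j' k'.
    by rewrite mul_i_mul_i; congr (- _); ring.
  rewrite (eq_bigr _ (fun l _ => W2E l)) (eq_bigr _ (fun l _ => W3E l)).
  by rewrite sumrN -!mulr_sumr Smx_addM_dot // addrN.
rewrite -big_split big1 // => b _ /=.
have [_ -> _] := partials_ixZre a0 b j k.
have [_ -> _] := partials_ixZre a0 b j' k'.
have [_ -> _] := partials_ixZim a0 b j k.
have [_ -> _] := partials_ixZim a0 b j' k'.
by rewrite !mulrNN mul_i_mul_i; exact: addrN.
Qed.

End Harmonicity.

Theorem proposition9p3 (R : realType) (p r : nat) (hp : (0 < p)%N)
  (hr : (2 <= r)%N) (M : 'M[R[i]]_r) (hM : skew_cplx M) :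
  (* hat Phi* does not depend on the last row of X *)
  (forall X X' : 'M[R]_(p + p + r + r, p),
      inV X -> inV X' -> droplast X = droplast X' ->
      hatPhi M X = hatPhi M X') /\
  (* the induced map Phi* on V*_{p,s-1}(R) has components forming an
     orthogonal harmonic family of GL_p(R)-invariant functions *)
  (forall Phi : 'M[R]_(p + p + r + r.-1, p) -> 'M[R[i]]_(r.-1, p),
      (forall X, inV X -> Phi (droplast X) = hatPhi M X) ->
      orthogonal_harmonic_family
        (fun jk : 'I_r.-1 * 'I_p => fun Y => Phi Y jk.1 jk.2) (@inV' R p r) /\
      (forall (j : 'I_r.-1) (k : 'I_p),
          GL_invariant (fun Y => Phi Y j k) (@inV' R p r))).
Proof.
case: r hr M hM => [//|r] _ M hM; split.
  by move=> X X' _ _; apply: hatPhi_droplast.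
move=> Phi PhiE; split.
  move=> Y hY; split=> [[j k]|[j k] [j' k']].
    by split; [exact (C2_at_Phi PhiE hY j k) | exact (tau_Phi PhiE hY j k)].
  exact (kappa_Phi hM PhiE hY j k j' k').
move=> j k Y g [X [hX <-]] gu /=.
by rewrite -droplast_mulmx !PhiE ?hatPhi_mulmx //; [case: hX | apply: inV_mulmx].
Qed.
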